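(* Let $\Pi\in\boldsymbol{\Pi}_{q,r}$ and $W\in\mathbb{R}^{q\times p}$, and define $\Pi_W:=\begin{bmatrix}W^\top\Pi_{11}W&W^\top\Pi_{12}\\ \Pi_{21}W&\Pi_{22}\end{bmatrix}\in\mathbb{S}^{p+r}$. Then $\mathcal{Z}_r(\Pi)W\subseteq\mathcal{Z}_r(\Pi_W)$. If, in addition, $W$ has full column rank or $\Pi_{22}$ is nonsingular, then $\mathcal{Z}_r(\Pi)W=\mathcal{Z}_r(\Pi_W)$.
   Context: $\mathbb{S}^k$ denotes the real symmetric $k\times k$ matrices; for symmetric matrices, $A\ge 0$ means positive semidefinite. $A^\dagger$ is the Moore–Penrose pseudo-inverse. Any $\Pi\in\mathbb{S}^{q+r}$ is partitioned as $\Pi=\begin{bmatrix}\Pi_{11}&\Pi_{12}\\ \Pi_{21}&\Pi_{22}\end{bmatrix}$ with $\Pi_{11}\in\mathbb{S}^q$, $\Pi_{22}\in\mathbb{S}^r$. The generalized Schur complement is $\Pi\mid\Pi_{22}:=\Pi_{11}-\Pi_{12}\Pi_{22}^\dagger\Pi_{21}$. The set $\boldsymbol{\Pi}_{q,r}$ consists of all $\Pi\in\mathbb{S}^{q+r}$ with $\Pi_{22}\le 0$, $\Pi\mid\Pi_{22}\ge 0$ and $\ker\Pi_{22}\subseteq\ker\Pi_{12}$. Define $\mathcal{Z}_r(\Pi)=\{Z\in\mathbb{R}^{r\times q}:\begin{bmatrix}I_q\\ Z\end{bmatrix}^\top\Pi\begin{bmatrix}I_q\\ Z\end{bmatrix}\ge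 0\}$ (and analogously $\mathcal{Z}_r(\Pi_W)\subseteq\mathbb{R}^{r\times p}$ with $I_p$). For a set $\mathcal{S}\subseteq\mathbb{R}^{r\times q}$, $\mathcal{S}W:=\{SW:S\in\mathcal{S}\}$. *)

From Stdlib Require Import ClassicalEpsilon.
From mathcomp Require Import all_boot all_order all_algebra.
Set Implicit Arguments. Unset Strict Implicit. Unset Printing Implicit Defensive.
Import Order.TTheory GRing.Theory Num.Theory.
Local Open Scope ring_scope.

Definition symmetric (R : ringType) (n : nat) (A : 'M[R]_n) : Prop := A^T = A.

Definition psd (R : realFieldType) (n : nat) (A : 'M[R]_n) : Prop :=
  A^T = A /\ forall x : 'cV[R]_n, 0 <= (x^T *m A *m x) 0 0.

Definition is_pinv (R : realFieldType) (m n : nat) (A : 'M[R]_(m, n))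
  (X : 'M[R]_(n, m)) : Prop :=
  [/\ A *m X *m A = A, X *m A *m X = X, (A *m X)^T = A *m X & (X *m A)^T = X *m A].

(* Moore-Penrose pseudo-inverse (exists and is unique for real matrices) *)
Definition pinv (R : realFieldType) (m n : nat) (A : 'M[R]_(m, n)) : 'M[R]_(n, m) :=
  epsilon (inhabits 0) (fun X => is_pinv A X).

Definition schur (R : realFieldType) (q r : nat) (Pi : 'M[R]_(q + r)) : 'M[R]_q :=
  ulsubmx Pi - ursubmx Pi *m pinv (drsubmx Pi) *m dlsubmx Pi.

Definition PiSet (R : realFieldType) (q r : nat) (Pi : 'M[R]_(q + r)) : Prop :=
  [/\ symmetric Pi,
      psd (- drsubmx Pi),
      psd (schur Pi)
    & forall v : 'cV[R]_r, drsubmx Pi *m v = 0 -> ursubmx Pi *m v = 0].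

Definition inZ (R : realFieldType) (q r : nat) (Pi : 'M[R]_(q + r))
  (Z : 'M[R]_(r, q)) : Prop :=
  psd ((col_mx 1%:M Z)^T *m Pi *m col_mx 1%:M Z).

Definition PiW (R : realFieldType) (q r p : nat) (Pi : 'M[R]_(q + r))
  (W : 'M[R]_(q, p)) : 'M[R]_(p + r) :=
  block_mx (W^T *m ulsubmx Pi *m W) (W^T *m ursubmx Pi)
           (dlsubmx Pi *m W) (drsubmx Pi).

From Stdlib Require Import ClassicalEpsilon.
From mathcomp Require Import all_boot all_order all_algebra.
From mathcomp Require Import lra.
Set Implicit Arguments. Unset Strict Implicit. Unset Printing Implicit Defensive.
Import Order.TTheory GRing.Theory Num.Theory.
Local Open Scope ring_scope.

(* Completing the square with K := (Pi22^+)' Pi21 (possible since ker Pi22 <= ker Pi12)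
   gives the congruence Pi_W = T' diag(W' S W, Pi22) T with T = [1 0; K W 1] and
   S = Pi | Pi22, so Y is in Z_r(Pi_W) iff W' S W + E' Pi22 E >= 0 for E := K W + Y;
   taking W = 1 describes Z_r(Pi) the same way. The inclusion Z_r(Pi) W <= Z_r(Pi_W) is
   then a congruence by W. Conversely, if the rows of E lie in the row space of W (clear
   when W has full column rank; when Pi22 is invertible, Pi22 <= 0 forces
   ker W <= ker (W' S W) <= ker E), then D := E P' + G with P (W' S W) = S W,
   G W = E (1 - P' W) and Pi22 G = 0 satisfies D W = E and S + D' Pi22 D >= 0, since
   x' S x >= u' (W' S W) u for u = P' x. Then Z := D - K works. *)

Section RealMatrices.
Variable R : realFieldType.

Lemma mulmx_trmx_eq0 m n (M : 'M[R]_(m, n)) : M *m M^T = 0 -> M = 0.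
Proof.
move=> MMt0; apply/matrixP => i j; rewrite mxE.
have : \sum_k M i k ^+ 2 = (M *m M^T) i i.
  by rewrite mxE; apply: eq_bigr => k _; rewrite mxE expr2.
rewrite MMt0 mxE => /eqP; rewrite psumr_eq0 => [|k _]; last exact: sqr_ge0.
by move=> /allP/(_ j (mem_index_enum j)); rewrite sqrf_eq0 => /eqP.
Qed.

Lemma submx_ker m1 m2 n (A : 'M[R]_(m1, n)) (B : 'M_(m2, n)) :
  (forall v : 'cV_n, B *m v = 0 -> A *m v = 0) -> (A <= B)%MS.
Proof.
move=> kerBA; rewrite submxE; move: (cokermx B) (mulmx_coker B) => C BC0.
apply/eqP/matrixP => i j; have /matrixP/(_ i 0) : A *m col j C = 0.
  by apply: kerBA; rewrite colE mulmxA BC0 mul0mx.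
by rewrite !mxE => h; rewrite -[RHS]h; apply: eq_bigr => k _; rewrite mxE.
Qed.

Lemma gram_unitmx m k (B : 'M[R]_(m, k)) : row_free B^T -> B^T *m B \in unitmx.
Proof.
move=> freeBt; rewrite -row_free_unit -kermx_eq0; apply/eqP.
have KBt0 : kermx (B^T *m B) *m B^T = 0.
  apply: mulmx_trmx_eq0.
  by rewrite trmx_mul trmxK mulmxA -(mulmxA _ B^T) mulmx_ker mul0mx.
by apply/eqP; rewrite -(mulmx_free_eq0 _ freeBt) KBt0.
Qed.

Lemma is_pinv_full_rank_factor m n k (B : 'M[R]_(m, k)) (C : 'M_(k, n)) :
  B^T *m B \in unitmx -> C *m C^T \in unitmx ->
  is_pinv (B *m C) (C^T *m invmx (C *m C^T) *m invmx (B^T *m B) *m B^T).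
Proof.
move=> uB uC; set GB := B^T *m B; set GC := C *m C^T.
have GB_sym : (invmx GB)^T = invmx GB by rewrite trmx_inv trmx_mul trmxK.
have GC_sym : (invmx GC)^T = invmx GC by rewrite trmx_inv trmx_mul trmxK.
have GBK j (U : 'M_(k, j)) : invmx GB *m (B^T *m (B *m U)) = U by rewrite mulmxA mulKmx.
have GCK j (V : 'M_(k, j)) : invmx GC *m (C *m (C^T *m V)) = V by rewrite mulmxA mulKmx.
have GCKV j (V : 'M_(k, j)) : C *m (C^T *m (invmx GC *m V)) = V by rewrite mulmxA mulKVmx.
have KGC j (U : 'M_(j, k)) : U *m C *m C^T *m invmx GC = U by rewrite -(mulmxA U) mulmxK.
split.
- by rewrite -!mulmxA GBK !mulmxA KGC.
- by rewrite -!mulmxA GBK GCK.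
- by rewrite -!mulmxA GCKV !trmx_mul GB_sym trmxK mulmxA.
- by rewrite -!mulmxA GBK !trmx_mul GC_sym trmxK mulmxA.
Qed.

Lemma pinvP m n (A : 'M[R]_(m, n)) : is_pinv A (pinv A).
Proof.
apply: epsilon_spec.
have freeBt : row_free (col_base A)^T.
  by rewrite /row_free mxrank_tr; apply: col_base_full.
have freeC : row_free ((row_base A)^T)^T by rewrite trmxK row_base_free.
have := gram_unitmx freeC; rewrite trmxK.
move=> /(is_pinv_full_rank_factor (gram_unitmx freeBt)).
by rewrite mulmx_base => ?; eexists; eassumption.
Qed.

Lemma quadratic_ge0_linear_coef_eq0 (a b c : R) :
  a <= 0 -> 0 <= b -> (forall t, 0 <= a + 2 * t * c + t ^+ 2 * b) -> c = 0.
Proof.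
move=> a_le0 b_ge0 /(_ (- (c / (b + 1)))).
have c_eq : c = c / (b + 1) * (b + 1) by rewrite divfK // gt_eqF // ltr_wpDl.
move: (c / (b + 1)) c_eq => s ->; nra.
Qed.

Lemma psd_ker n (N : 'M[R]_n) (v : 'cV_n) :
  psd N -> (v^T *m N *m v) 0 0 <= 0 -> N *m v = 0.
Proof.
move=> [Nsym Nge0] vNv_le0; set w := N *m v.
have vN : v^T *m N = w^T by rewrite trmx_mul Nsym.
have expand t : (v + t *: w)^T *m N *m (v + t *: w) =
    v^T *m N *m v + t *: (w^T *m w + w^T *m w) + t ^+ 2 *: (w^T *m N *m w).
  rewrite !linearD !linearZ /= !mulmxDl -!scalemxAl vN -!mulmxA -/w.
  by rewrite !scalerDr scalerA -expr2 !addrA.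
have ww0 : (w^T *m w) 0 0 = 0.
  apply: (quadratic_ge0_linear_coef_eq0 vNv_le0 (Nge0 w)) => t.
  have := Nge0 (v + t *: w); rewrite expand.
  move: (v^T *m N *m v) (w^T *m w) (w^T *m N *m w) => vNv ww wNw; rewrite !mxE; lra.
have : w^T *m w^T^T = 0 by rewrite trmxK [w^T *m w]mx11_scalar ww0 raddf0.
by move/mulmx_trmx_eq0/(congr1 trmx); rewrite trmxK => ->; rewrite linear0.
Qed.

Lemma psd_congr m n (M : 'M[R]_m) (W : 'M_(m, n)) : psd M -> psd (W^T *m M *m W).
Proof.
move=> [Msym M_ge0]; split; first by rewrite !trmx_mul trmxK Msym mulmxA.
by move=> x; have := M_ge0 (W *m x); rewrite trmx_mul !mulmxA.
Qed.

Lemma psd_add_nsd_ker p r (Q : 'M[R]_p) (A : 'M_r) (E : 'M_(r, p)) (v : 'cV_p) :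
  psd (Q + E^T *m A *m E) -> psd (- A) -> Q *m v = 0 -> A *m (E *m v) = 0.
Proof.
move=> [_ QE_ge0] nA Qv; apply/eqP; rewrite -oppr_eq0 -mulNmx; apply/eqP/psd_ker => //.
have -> : (E *m v)^T *m - A *m (E *m v) = - (v^T *m (E^T *m A *m E) *m v).
  by rewrite trmx_mul mulmxN mulNmx !mulmxA.
rewrite mxE oppr_le0; have := QE_ge0 v.
by rewrite mulmxDr mulmxDl -(mulmxA _ Q) Qv mulmx0 add0r.
Qed.

Lemma quad_form_orth_split q p (S : 'M[R]_q) (W : 'M_(q, p)) (x : 'cV_q) (u : 'cV_p) :
  S^T = S -> W^T *m S *m x = W^T *m S *m W *m u ->
  x^T *m S *m x =
    (x - W *m u)^T *m S *m (x - W *m u) + u^T *m (W^T *m S *m W) *m u.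
Proof.
move=> Ssym normal_eq.
have WuSx : (W *m u)^T *m S *m x = u^T *m (W^T *m S *m W) *m u.
  by rewrite trmx_mul -!mulmxA (mulmxA W^T S x) normal_eq !mulmxA.
have xSWu : x^T *m S *m (W *m u) = u^T *m (W^T *m S *m W) *m u.
  rewrite -WuSx [LHS]mx11_scalar -tr_scalar_mx -mx11_scalar.
  by rewrite !trmx_mul trmxK Ssym !mulmxA.
have WuSWu : (W *m u)^T *m S *m (W *m u) = u^T *m (W^T *m S *m W) *m u.
  by rewrite trmx_mul !mulmxA.
by rewrite mulmxBr [(x - _)^T]linearB /= !mulmxBl xSWu WuSx WuSWu subrr subr0 subrK.
Qed.

Lemma psd_lift q r p (S : 'M[R]_q) (A : 'M_r) (W : 'M_(q, p)) (E : 'M_(r, p)) :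
  psd S -> psd (- A) -> psd (W^T *m S *m W + E^T *m A *m E) -> (E <= W)%MS ->
  exists D : 'M_(r, q), D *m W = E /\ psd (S + D^T *m A *m D).
Proof.
move=> Spsd nA QEpsd EW; have [Ssym S_ge0] := Spsd; have [_ QE_ge0] := QEpsd.
have Asym : A^T = A by have [/eqP] := nA; rewrite linearN /= eqr_opp => /eqP.
set Q := W^T *m S *m W; have [Qsym _] : psd Q := psd_congr W Spsd.
have [P PQ] : exists P, P *m Q = S *m W.
  exists (S *m W *m pinvmx Q); apply: mulmxKpV; apply: submx_ker => v Qv.
  rewrite -mulmxA; apply: psd_ker => //.
  have -> : (W *m v)^T *m S *m (W *m v) = v^T *m (Q *m v) by rewrite trmx_mul !mulmxA.
  by rewrite Qv mulmx0 mxE.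
have QPt : Q *m P^T = W^T *m S by rewrite -Qsym -trmx_mul PQ trmx_mul Ssym.
set H := 1%:M - P^T *m W.
have QH : Q *m H = 0 by rewrite mulmxBr mulmx1 mulmxA QPt subrr.
have AEH : A *m E *m H = 0.
  have /submxP[M ->] : (A *m E <= Q)%MS.
    by apply: submx_ker => v Qv; rewrite -mulmxA; apply: psd_add_nsd_ker QEpsd nA Qv.
  by rewrite -mulmxA QH mulmx0.
have EHW : (E *m H <= W)%MS.
  by have /submxP[M ->] := EW; rewrite mulmxBr mulmx1 !mulmxA -mulmxBl submxMl.
set G := E *m H *m pinvmx W.
have GW : G *m W = E *m H by apply: mulmxKpV.
have AG : A *m G = 0 by rewrite /G !(mulmxA A) AEH mul0mx.
exists (E *m P^T + G); split.
  by rewrite mulmxDl GW mulmxBr mulmx1 mulmxA addrC subrK.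
set D := E *m P^T + G.
split; first by rewrite linearD /= !trmx_mul trmxK Ssym Asym mulmxA.
move=> x; set u := P^T *m x.
have normal_eq : W^T *m S *m x = Q *m u by rewrite /u mulmxA QPt.
have ADx : A *m (D *m x) = A *m (E *m u).
  by rewrite mulmxDl mulmxDr (mulmxA A G) AG mul0mx addr0 -mulmxA.
have trmxA y z : y^T *m (A *m z) = (A *m y)^T *m z by rewrite trmx_mul Asym mulmxA.
have DAD : x^T *m (D^T *m A *m D) *m x = u^T *m (E^T *m A *m E) *m u.
  rewrite -!mulmxA (mulmxA x^T) (mulmxA u^T) -!trmx_mul.
  by rewrite ADx trmxA ADx -trmxA.
rewrite mulmxDr mulmxDl (quad_form_orth_split Ssym normal_eq) DAD.
by rewrite -addrA -mulmxDl -mulmxDr mxE addr_ge0.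
Qed.

Lemma quad_form_ldl m n (Q : 'M[R]_m) (A : 'M_n) (L Y : 'M_(n, m)) :
  (col_mx 1%:M Y)^T *m
    ((block_mx 1%:M 0 L 1%:M)^T *m block_mx Q 0 0 A *m block_mx 1%:M 0 L 1%:M) *m
  col_mx 1%:M Y = Q + (L + Y)^T *m A *m (L + Y).
Proof.
have Tcol : block_mx 1%:M 0 L 1%:M *m col_mx 1%:M Y = col_mx 1%:M (L + Y).
  by rewrite mul_block_col !mul1mx mul0mx mulmx1 addr0.
rewrite !mulmxA -trmx_mul -(mulmxA _ _ (col_mx _ _)) Tcol.
rewrite tr_col_mx trmx1 mul_row_block mulmx0 mul1mx addr0 mulmx0 add0r.
by rewrite mul_row_col mulmx1.
Qed.
End RealMatrices.

Section SchurFactor.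
Variables (R : realFieldType) (q r : nat) (Pi : 'M[R]_(q + r)).
Hypotheses (Pi_sym : Pi^T = Pi)
  (ker_sub : forall v : 'cV_r, drsubmx Pi *m v = 0 -> ursubmx Pi *m v = 0).

Lemma PiW_ldl : exists K : 'M_(r, q), forall p (W : 'M_(q, p)),
  PiW Pi W = (block_mx 1%:M 0 (K *m W) 1%:M)^T *m
               block_mx (W^T *m schur Pi *m W) 0 0 (drsubmx Pi) *m
             block_mx 1%:M 0 (K *m W) 1%:M.
Proof.
rewrite /PiW /schur; set A := drsubmx Pi; set X := pinv A.
have Asym : A^T = A by rewrite trmx_drsub Pi_sym.
have dl_ur : (dlsubmx Pi)^T = ursubmx Pi by rewrite trmx_dlsub Pi_sym.
have ur_dl : (ursubmx Pi)^T = dlsubmx Pi by rewrite trmx_ursub Pi_sym.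
have urXA : ursubmx Pi *m X *m A = ursubmx Pi.
  have [AXA _ _ _] := pinvP A.
  have /submxP[M ->] : (ursubmx Pi <= A)%MS := submx_ker ker_sub.
  by rewrite -!mulmxA (mulmxA A) AXA.
exists (X^T *m dlsubmx Pi) => p W; set K := X^T *m dlsubmx Pi.
have AK : A *m K = dlsubmx Pi.
  by rewrite /K -ur_dl mulmxA -{1}Asym -!trmx_mul mulmxA urXA.
have Kt : K^T = ursubmx Pi *m X by rewrite /K trmx_mul trmxK dl_ur.
rewrite tr_block_mx !trmx1 !linear0 !mulmx_block.
rewrite !mulmx1 !mul1mx !mulmx0 !mul0mx !addr0 !add0r.
rewrite -[_ *m A *m _]mulmxA (mulmxA A K) AK trmx_mul Kt -(mulmxA W^T _ A) urXA.
by rewrite mulmxBr mulmxBl !mulmxA subrK.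
Qed.

Lemma quad_form_PiW :
  exists K : 'M_(r, q), forall p (W : 'M_(q, p)) (Y : 'M_(r, p)),
  (col_mx 1%:M Y)^T *m PiW Pi W *m col_mx 1%:M Y =
  W^T *m schur Pi *m W + (K *m W + Y)^T *m drsubmx Pi *m (K *m W + Y).
Proof. by have [K PiWE] := PiW_ldl; exists K => p W Y; rewrite PiWE quad_form_ldl. Qed.

End SchurFactor.

Lemma PiW1 (R : realFieldType) (q r : nat) (Pi : 'M[R]_(q + r)) : PiW Pi 1%:M = Pi.
Proof. by rewrite /PiW trmx1 !mul1mx !mulmx1 submxK. Qed.

Theorem mainTheorem3 (R : realFieldType) (q r p : nat)
  (Pi : 'M[R]_(q + r)) (W : 'M[R]_(q, p)) :
  PiSet Pi ->
  (forall Z : 'M[R]_(r, q), inZ Pi Z -> inZ (PiW Pi W) (Z *m W)) /\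
  ((\rank W = p \/ drsubmx Pi \in unitmx) ->
   forall Y : 'M[R]_(r, p),
     inZ (PiW Pi W) Y <-> exists Z : 'M[R]_(r, q), inZ Pi Z /\ Y = Z *m W).
Proof.
move=> [Pi_sym nA Spsd ker_sub]; have [K quadPiW] := quad_form_PiW Pi_sym ker_sub.
set S := schur Pi; set A := drsubmx Pi.
have quadPi (Z : 'M_(r, q)) :
    (col_mx 1%:M Z)^T *m Pi *m col_mx 1%:M Z = S + (K + Z)^T *m A *m (K + Z).
  by rewrite -{1}[Pi]PiW1 quadPiW trmx1 mul1mx !mulmx1.
have inZW Z : inZ Pi Z -> inZ (PiW Pi W) (Z *m W).
  have congrW (D : 'M_(r, q)) : W^T *m (S + D^T *m A *m D) *m W =
      W^T *m S *m W + (D *m W)^T *m A *m (D *m W).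
    by rewrite mulmxDr mulmxDl trmx_mul !mulmxA.
  by rewrite /inZ quadPi quadPiW -/S -/A -mulmxDl -congrW; apply: psd_congr.
split => // WA Y; split; last by case=> Z [/inZW ? ->].
rewrite /inZ quadPiW => QEpsd.
have EW : ((K *m W + Y)%R <= W)%MS.
  case: WA => [rkW | Aunit]; first by apply: submx_full; rewrite /row_full rkW.
  apply: submx_ker => v Wv; apply: (can_inj (mulKmx Aunit)); rewrite mulmx0.
  by apply: psd_add_nsd_ker QEpsd nA _; rewrite -mulmxA Wv mulmx0.
have [D [DW SDpsd]] := psd_lift Spsd nA QEpsd EW.
exists (D - K); rewrite /inZ quadPi [K + _]addrC subrK; split=> //.
by rewrite mulmxBl DW addrAC subrr add0r.
Qed.
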